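(* Let $\mathcal{B}$ be a spherical building of infinite thickness. Then there exists a chamber $C$ of $\mathcal{B}$ such that $\mathrm{Opp}(C)$ contains an apartment of $\mathcal{B}$.
   Context: A spherical building has infinite thickness if every codimension-one simplex (panel) is contained in infinitely many chambers. $\mathrm{Opp}(C)$ is the subcomplex of chambers opposite to $C$ (and their faces); two chambers are opposite if they lie on opposite sides of every wall in an apartment containing both. *)

(* Buildings are formalized as W-metric buildings
   (Abramenko--Brown, Buildings, Def. 5.1) of type (W,S), with W a finite
   group (spherical case). *)
From mathcomp Require Import all_boot all_fingroup.
Set Implicit Arguments. Unset Strict Implicit. Unset Printing Implicit Defensive.

Local Open Scope group_scope.

Section Coxeter.
Variable gT : finGroupType.

Inductive cox_rel (S : {set gT}) : seq gT -> seq gT -> Prop :=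
| CRinv s : s \in S -> cox_rel S [:: s; s] [::]
| CRbraid s t : s \in S -> t \in S ->
    cox_rel S (flatten (nseq #[s * t] [:: s; t])) [::].

Inductive cox_cong (S : {set gT}) : seq gT -> seq gT -> Prop :=
| CCrefl u : cox_cong S u u
| CCsym u v : cox_cong S u v -> cox_cong S v u
| CCtrans u v w : cox_cong S u v -> cox_cong S v w -> cox_cong S u w
| CCstep u v a b : cox_rel S a b -> cox_cong S (u ++ a ++ v) (u ++ b ++ v).

(* (W,S) is a Coxeter system: S generates W, consists of involutions, and
   W has the presentation <S | s^2 = 1, (st)^m(s,t) = 1>, i.e. any two words
   in S with the same product in W are related by the defining relations. *)
Definition coxeter_system (S : {set gT}) : Prop :=
  [/\ <<S>> = [set: gT],
      (forall s, s \in S -> #[s] = 2) &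
      (forall u v : seq gT, all (mem S) u -> all (mem S) v ->
         \prod_(x <- u) x = \prod_(x <- v) x -> cox_cong S u v)].

Definition has_word (S : {set gT}) (w : gT) (n : nat) : bool :=
  [exists t : n.-tuple gT, all (mem S) t && (\prod_(x <- t) x == w)].

(* Coxeter length l_S(w): the least n with a word of length n
   (reduced words in a finite Coxeter group have length < #|W|). *)
Definition coxlen (S : {set gT}) (w : gT) : nat :=
  find (has_word S w) (iota 0 #|gT|.+1).

End Coxeter.

Section Building.
Variables (gT : finGroupType) (S : {set gT}) (Ch : Type) (delta : Ch -> Ch -> gT).

Definition is_building : Prop :=
  [/\ coxeter_system S,
      inhabited Ch,
      (forall c d, delta c d = 1 <-> c = d),
      (forall c d c' s, s \in S -> delta c' c = s ->
          (delta c' d = s * delta c d \/ delta c' d = delta c d) /\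
          (coxlen S (s * delta c d) = (coxlen S (delta c d)).+1 ->
             delta c' d = s * delta c d)) &
      (forall c d s, s \in S ->
          exists c', delta c' c = s /\ delta c' d = s * delta c d)].

(* A predicate on chambers is infinite: it is not contained in the set of
   entries of any finite list. *)
Definition infinite_pred (P : Ch -> Prop) : Prop :=
  forall l : seq Ch, exists x, P x /\ (forall i, i < size l -> nth x l i <> x)%N.

(* Infinite thickness: every panel (the s-panel of c is the set of d with
   delta c d in {1, s}) contains infinitely many chambers. *)
Definition infinitely_thick : Prop :=
  forall c s, s \in S -> infinite_pred (fun d => delta c d = 1 \/ delta c d = s).

(* c and d are opposite: delta c d is the longest element w0 of W. *)
Definition opposite (c d : Ch) : Prop :=
  forall w : gT, coxlen S w <= coxlen S (delta c d).

(* Apartments: images of isometries W -> Ch, W carrying delta_W(x,y) = x^-1 y. *)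
Definition apartment (A : Ch -> Prop) : Prop :=
  exists alpha : gT -> Ch,
    (forall x y, delta (alpha x) (alpha y) = x^-1 * y) /\
    (forall d, A d <-> exists w, d = alpha w).

End Building.

From mathcomp Require Import all_boot all_fingroup zify.
From Stdlib Require Import ClassicalEpsilon Classical_Prop.
Set Implicit Arguments. Unset Strict Implicit. Unset Printing Implicit Defensive.

(* Let w0 be the longest element of W. Then l(u) + l(u^-1 w0) = l(w0) for every u; this rests
   on Tits' solution of the word problem: the parity of the number of occurrences of a
   reflection t in the reflection sequence of a word depends only on the product of the word.
   Hence, for chambers c0, d0 with delta c0 d0 = w0, each u in W is the coordinate of exactly
   one chamber x (delta c0 x = u and delta x d0 = u^-1 w0), and u |-> x is an isometry of W
   onto an apartment A.
   For a chamber e, the sum of l(delta e y) over the chambers y of A is at most |W| l(w0). If e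
   is not opposite some y, pick a panel of e along which delta e y goes up; in that panel at
   most one chamber is closer than e to any given chamber of A, so by infinite thickness some
   chamber e' of the panel is at least as far as e from all of A and strictly farther from y.
   Hence a chamber maximising the sum is opposite every chamber of A. *)

Local Open Scope group_scope.

Lemma bounded_nat_fun_max (T : Type) (F : T -> nat) (m : nat) (x0 : T) :
  (forall x, F x <= m) -> exists x, forall y, F y <= F x.
Proof.
move=> le_m; have [k le_k] : exists k, m - F x0 <= k by exists (m - F x0).
elim: k x0 le_k => [|k IHk] x le_k.
all: case: (classic (exists y, F x < F y)) => [[y lt_xy]|no_larger];
  last by exists x => y; rewrite leqNgt; apply/negP=> lt_xy; apply: no_larger; exists y.
  by have := le_m y; lia.
by apply: (IHk y); have := le_m y; lia.
Qed.

Section CoxeterGroup.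
Variables (gT : finGroupType) (S : {set gT}).
Hypothesis coxS : coxeter_system S.

Definition prodw (a : seq gT) : gT := \prod_(x <- a) x.

Local Notation Sword := (all (mem S)).
Local Notation ℓ := (coxlen S).

Lemma prodw_nil : prodw [::] = 1. Proof. exact: big_nil. Qed.
Lemma prodw_cons x a : prodw (x :: a) = x * prodw a. Proof. exact: big_cons. Qed.
Lemma prodw_cat a b : prodw (a ++ b) = prodw a * prodw b. Proof. exact: big_cat. Qed.
Lemma prodw_rcons a x : prodw (rcons a x) = prodw a * x.
Proof. by rewrite -cats1 prodw_cat prodw_cons prodw_nil mulg1. Qed.

Lemma gen_invg s : s \in S -> s^-1 = s.
Proof. by case: coxS => _ ord2 _ /ord2 ord_s; rewrite invg_expg ord_s. Qed.

Lemma gen_mulgg s : s \in S -> s * s = 1.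
Proof. by move=> /gen_invg {1}<-; rewrite mulVg. Qed.

Lemma gen_neq1 s : s \in S -> s != 1.
Proof. by case: coxS => _ ord2 _ /ord2 ord_s; rewrite -order_eq1 ord_s. Qed.

Lemma prodw_rev a : Sword a -> prodw (rev a) = (prodw a)^-1.
Proof.
elim: a => [|x a IHa] /=; first by rewrite prodw_nil invg1.
case/andP=> Sx Sa; rewrite rev_cons prodw_rcons IHa // prodw_cons invMg.
by rewrite (gen_invg Sx).
Qed.

Lemma Sword_exists w : exists2 a, Sword a & prodw a = w.
Proof.
case: coxS => genS _ _.
have : w \in <<S>> by rewrite genS inE.
case/gen_prodgP=> n [c Sc ->].
exists [seq c i | i <- index_enum 'I_n]; last by rewrite /prodw big_map.
by apply/allP=> _ /mapP[i _ ->]; apply: Sc.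
Qed.

Lemma has_wordP w n :
  reflect (exists a, [/\ Sword a, prodw a = w & size a = n]) (has_word S w n).
Proof.
apply: (iffP existsP) => [[t /andP[St /eqP <-]]|[a [Sa <- <-]]].
  by exists t; rewrite size_tuple.
by exists (in_tuple a); rewrite Sa eqxx.
Qed.

(* A shortest word has pairwise distinct prefix products, hence fewer than #|gT| letters. *)
Lemma has_short_word w : exists2 n, n < #|gT| & has_word S w n.
Proof.
have [a Sa <-] := Sword_exists w.
have ex_word : exists n, has_word S (prodw a) n by exists (size a); apply/has_wordP; exists a.
case: (ex_minnP ex_word) => n /has_wordP[b [Sb eq_ab <-]] b_min.
exists (size b); last by apply/has_wordP; exists b.
have prefix_inj : injective (fun i : 'I_(size b).+1 => prodw (take i b)).
  move=> i j; wlog lt_ij : i j / i < j => [hwlog eq_ij|eq_ij].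
    by case: (ltngtP i j) => [/hwlog->|/hwlog/(_ (esym eq_ij))->|/val_inj].
  have Sij : Sword (take i b ++ drop j b).
    by rewrite all_cat; apply/andP; split; apply/allP=> x;
      [move/mem_take | move/mem_drop]; apply/allP.
  have := b_min (size (take i b ++ drop j b)).
  suff -> : has_word S (prodw a) (size (take i b ++ drop j b)).
    rewrite size_cat size_take size_drop; have := ltn_ord j; case: ifP; lia.
  apply/has_wordP; exists (take i b ++ drop j b); split=> //.
  by rewrite prodw_cat eq_ij -prodw_cat cat_take_drop.
by have := leq_card _ prefix_inj; rewrite card_ord.
Qed.

Lemma coxlen_has_word w : has_word S w (ℓ w) /\ ℓ w <= #|gT|.
Proof.
have [n lt_n hw] := has_short_word w.
have has_iota : has (has_word S w) (iota 0 #|gT|.+1).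
  by apply/hasP; exists n => //; rewrite mem_iota add0n ltnS (ltnW lt_n).
have lt_len : ℓ w < #|gT|.+1 by move: has_iota; rewrite has_find size_iota.
by split=> //; have := nth_find 0%N has_iota; rewrite nth_iota.
Qed.

Lemma coxlen_min w n : has_word S w n -> ℓ w <= n.
Proof.
have [_ len_le] := coxlen_has_word w.
case: (leqP n #|gT|) => [le_n hw | lt_n _]; last exact: leq_trans (ltnW lt_n).
rewrite leqNgt; apply/negP=> /(before_find 0%N).
by rewrite nth_iota // add0n hw.
Qed.

Lemma coxlen_le_size a : Sword a -> ℓ (prodw a) <= size a.
Proof. by move=> Sa; apply/coxlen_min/has_wordP; exists a. Qed.

Lemma reduced_word_exists w : exists a, [/\ Sword a, prodw a = w & size a = ℓ w].
Proof. exact/has_wordP/(coxlen_has_word w).1. Qed.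

Lemma cox_cong_odd_size u v : cox_cong S u v -> odd (size u) = odd (size v).
Proof.
have size_alt (s t : gT) m : size (flatten (nseq m [:: s; t])) = m.*2.
  by elim: m => //= m ->; rewrite doubleS.
elim=> {u v} [//|u v _ -> //|u v w _ -> _ -> //|u v a b []] *.
  by rewrite !size_cat /= !oddD.
by rewrite !size_cat size_alt /= !oddD odd_double.
Qed.

Lemma odd_size_Sword a b : Sword a -> Sword b -> prodw a = prodw b ->
  odd (size a) = odd (size b).
Proof. by case: coxS => _ _ cong Sa Sb /(cong _ _ Sa Sb)/cox_cong_odd_size. Qed.

Lemma coxlen_eq0 w : (ℓ w == 0%N) = (w == 1).
Proof.
apply/eqP/eqP=> [|->]; last by apply/eqP; rewrite -leqn0 -prodw_nil coxlen_le_size.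
by have [a [_ <- <-]] := reduced_word_exists w => /size0nil->; rewrite prodw_nil.
Qed.

Lemma coxlen1 : ℓ 1 = 0%N.
Proof. by apply/eqP; rewrite coxlen_eq0. Qed.

Lemma coxlenM x y : ℓ (x * y) <= ℓ x + ℓ y.
Proof.
have [a [Sa <- <-]] := reduced_word_exists x.
have [b [Sb <- <-]] := reduced_word_exists y.
by rewrite -size_cat -prodw_cat coxlen_le_size // all_cat Sa.
Qed.

Lemma coxlenV x : ℓ x^-1 = ℓ x.
Proof.
have le_inv y : ℓ y^-1 <= ℓ y.
  have [a [Sa <- <-]] := reduced_word_exists y.
  by rewrite -prodw_rev // -size_rev coxlen_le_size ?all_rev.
by apply/eqP; rewrite eqn_leq; apply/andP; split; [|rewrite -{1}[x]invgK]; apply: le_inv.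
Qed.

Lemma coxlen_gen s : s \in S -> ℓ s = 1%N.
Proof.
move=> Ss; apply/eqP; rewrite eqn_leq lt0n coxlen_eq0 gen_neq1 // andbT.
by rewrite -[s]mulg1 -prodw_nil -prodw_cons coxlen_le_size //= Ss.
Qed.

Lemma coxlen_mulg_gen s w : s \in S ->
  ℓ (s * w) = (ℓ w).+1 \/ ℓ w = (ℓ (s * w)).+1.
Proof.
move=> Ss.
have le_sw : ℓ (s * w) <= (ℓ w).+1 by rewrite -add1n -(coxlen_gen Ss) coxlenM.
have le_w : ℓ w <= (ℓ (s * w)).+1.
  by rewrite -add1n -(coxlen_gen Ss) -{1}[w](mulKg s) (gen_invg Ss) coxlenM.
have [a [Sa eq_a size_a]] := reduced_word_exists w.
have [b [Sb eq_b size_b]] := reduced_word_exists (s * w).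
have := @odd_size_Sword (s :: a) b; rewrite /= Ss Sa Sb prodw_cons eq_a eq_b.
move=> /(_ isT isT erefl); rewrite size_a size_b.
case: (ltngtP (ℓ (s * w)) (ℓ w)) => [? _|? _|->]; [lia | lia|].
by case: (odd _).
Qed.

Lemma coxlen_mulgr_gen s w : s \in S ->
  ℓ (w * s) = (ℓ w).+1 \/ ℓ w = (ℓ (w * s)).+1.
Proof.
move=> Ss; rewrite -(coxlenV (w * s)) -(coxlenV w) invMg (gen_invg Ss).
exact: coxlen_mulg_gen.
Qed.

Lemma left_descent_exists w : w != 1 -> exists2 s, s \in S & ℓ w = (ℓ (s * w)).+1.
Proof.
have [[|s a] [Sa <- size_a]] := reduced_word_exists w; first by rewrite prodw_nil eqxx.
move: Sa => /= /andP[Ss Sa] _; exists s => //.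
have le_a : ℓ (s * prodw (s :: a)) <= size a.
  by rewrite prodw_cons mulgA gen_mulgg // mul1g coxlen_le_size.
case: (coxlen_mulg_gen (prodw (s :: a)) Ss) => // eq_len.
by move: le_a; rewrite eq_len -size_a /=; lia.
Qed.

Lemma right_descent_exists w : w != 1 -> exists2 s, s \in S & ℓ w = (ℓ (w * s)).+1.
Proof.
rewrite -eq_invg1 => /left_descent_exists[s Ss desc]; exists s => //.
by rewrite -(coxlenV (w * s)) invMg (gen_invg Ss) -(coxlenV w).
Qed.

Definition lconj (g h : gT) : gT := g * h * g^-1.

Lemma lconjM g1 g2 h : lconj (g1 * g2) h = lconj g1 (lconj g2 h).
Proof. by rewrite /lconj invMg !mulgA. Qed.

Lemma lconjK g : cancel (lconj g) (lconj g^-1).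
Proof. by move=> h; rewrite -lconjM mulVg /lconj mul1g invg1 mulg1. Qed.

Lemma lconjKV g : cancel (lconj g^-1) (lconj g).
Proof. by move=> h; rewrite -lconjM mulgV /lconj mul1g invg1 mulg1. Qed.

Lemma lconjgg g : lconj g g = g.
Proof. by rewrite /lconj mulgK. Qed.

Lemma lconjVgg g : lconj g^-1 g = g.
Proof. by rewrite /lconj invgK mulVg mul1g. Qed.

Lemma count_lconj g t l : count_mem t (map (lconj g) l) = count_mem (lconj g^-1 t) l.
Proof.
rewrite count_map; apply: eq_count => h /=.
by rewrite -{1}(lconjKV g t) (can_eq (lconjK g)).
Qed.

(* For [a = x_1 ... x_n], the i-th entry of [refl_seq a] is the reflection
   x_1 ... x_(i-1) x_i x_(i-1)^-1 ... x_1^-1. *)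
Fixpoint refl_seq (a : seq gT) : seq gT :=
  if a is x :: a' then x :: map (lconj x) (refl_seq a') else [::].

Definition refl_parity (a : seq gT) (t : gT) : bool := odd (count_mem t (refl_seq a)).

Lemma refl_seq_cat a b :
  refl_seq (a ++ b) = refl_seq a ++ map (lconj (prodw a)) (refl_seq b).
Proof.
elim: a => [|x a IHa] /=.
  by rewrite prodw_nil -[LHS]map_id; apply: eq_map => h; rewrite /lconj mul1g invg1 mulg1.
rewrite IHa map_cat -map_comp prodw_cons; congr (_ :: _ ++ _).
by apply: eq_map => h /=; rewrite lconjM.
Qed.

Lemma refl_parity_cat a b t :
  refl_parity (a ++ b) t = refl_parity a t (+) refl_parity b (lconj (prodw a)^-1 t).
Proof. by rewrite /refl_parity refl_seq_cat count_cat count_lconj oddD. Qed.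

Lemma prodw_alternating (s t : gT) m : prodw (flatten (nseq m [:: s; t])) = (s * t) ^+ m.
Proof. by elim: m => [|m IHm]; rewrite ?prodw_nil //= !prodw_cons IHm mulgA expgS. Qed.

Lemma refl_seq_alternating (s t : gT) m : s^-1 = s -> t^-1 = t ->
  refl_seq (flatten (nseq m [:: s; t])) = mkseq (fun i => (s * t) ^+ i * s) m.*2.
Proof.
move=> invs invt; elim: m => [//|m IHm].
rewrite -[flatten _]/([:: s; t] ++ flatten (nseq m [:: s; t])) refl_seq_cat IHm /=.
rewrite !prodw_cons prodw_nil mulg1 /mkseq doubleS /= -[in iota 2 _](addn0 2) iotaDl.
rewrite -!map_comp /lconj invs expg0 mul1g expg1; congr [:: _, _ & _].
by apply: eq_map => i /=; rewrite invMg invs invt expgSr !mulgA -expgS.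
Qed.

Lemma count_mem_periodic (g rho s : gT) m : rho ^+ m = 1 ->
  ~~ odd (count_mem g (mkseq (fun i => rho ^+ i * s) m.*2)).
Proof.
move=> rho_m; rewrite -addnn /mkseq iotaD add0n -[in iota m _](addn0 m) iotaDl.
rewrite map_cat -map_comp addn0 count_cat oddD.
suff -> : [seq ((fun i => rho ^+ i * s) \o addn m) i | i <- iota 0 m] =
          [seq rho ^+ i * s | i <- iota 0 m] by rewrite addbb.
by apply: eq_map => i /=; rewrite expgD rho_m mul1g.
Qed.

Lemma cox_cong_invariant u v : cox_cong S u v ->
  prodw u = prodw v /\ refl_parity u =1 refl_parity v.
Proof.
elim=> {u v} [//|u v _ [-> par]|u v w _ [-> par1] _ [-> par2]|u v a b rel_ab].
- by split=> // t; rewrite par.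
- by split=> // t; rewrite par1 par2.
have [eq_ab par_ab] : prodw a = prodw b /\ refl_parity a =1 refl_parity b.
  case: rel_ab => [s Ss|s t Ss St].
    split=> [|g]; first by rewrite !prodw_cons prodw_nil mulg1 gen_mulgg.
    by rewrite /refl_parity /= /lconj mulgK; case: (s == g).
  split=> [|g]; first by rewrite prodw_alternating expg_order prodw_nil.
  rewrite /refl_parity (refl_seq_alternating _ (gen_invg Ss) (gen_invg St)) /=.
  exact/negbTE/count_mem_periodic/expg_order.
split=> [|t]; first by rewrite !prodw_cat eq_ab.
by rewrite !refl_parity_cat eq_ab par_ab.
Qed.

Lemma refl_parity_prodw a b : Sword a -> Sword b -> prodw a = prodw b ->
  refl_parity a =1 refl_parity b.
Proof. by case: coxS => _ _ cong Sa Sb /(cong _ _ Sa Sb)/cox_cong_invariant[]. Qed.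

Lemma coxlen_mul_refl_lt a t : Sword a -> refl_parity a t -> ℓ (t * prodw a) < size a.
Proof.
move=> Sa /odd_gt0; rewrite -has_count has_pred1.
elim: a Sa t => [//|x a IHa] /= /andP[Sx Sa] t; rewrite inE prodw_cons.
case/predU1P=> [->|/mapP[t' t'a ->]].
  by rewrite mulgA gen_mulgg // mul1g ltnS coxlen_le_size.
rewrite /lconj (gen_invg Sx) -!mulgA (mulgA x x) (gen_mulgg Sx) mul1g.
by apply: leq_ltn_trans (coxlenM _ _) _; rewrite coxlen_gen // add1n ltnS IHa.
Qed.

Fixpoint palindrome (a : seq gT) (s : gT) : seq gT :=
  if a is x :: a' then x :: rcons (palindrome a' s) x else [:: s].

Lemma all_palindrome a s : Sword a -> s \in S -> Sword (palindrome a s).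
Proof.
move=> + Ss; elim: a => [|x a IHa] /=; rewrite ?Ss // all_rcons.
by case/andP=> Sx /IHa->; rewrite Sx andbT; apply: Sx.
Qed.

Lemma size_palindrome a s : size (palindrome a s) = (size a).*2.+1.
Proof. by elim: a => [|x a IHa] //=; rewrite size_rcons IHa doubleS. Qed.

Lemma prodw_palindrome a s : Sword a -> prodw (palindrome a s) = lconj (prodw a) s.
Proof.
elim: a => [|x a IHa] /=; first by rewrite prodw_cons !prodw_nil /lconj mulg1 mul1g invg1 mulg1.
case/andP=> Sx Sa; rewrite prodw_cons prodw_rcons IHa // prodw_cons lconjM.
by rewrite {2}/lconj (gen_invg Sx) mulgA.
Qed.

Lemma refl_parity_palindrome a s : Sword a ->
  refl_parity (palindrome a s) (lconj (prodw a) s).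
Proof.
have parity1 x t : refl_parity [:: x] t = (x == t) by rewrite /refl_parity /= addn0 oddb.
elim: a => [|x a IHa] /=; first by rewrite prodw_nil /lconj mul1g invg1 mulg1 parity1.
case/andP=> Sx Sa; set t := lconj (prodw a) s.
rewrite -cat1s -cats1 refl_parity_cat parity1 refl_parity_cat parity1 prodw_palindrome //.
rewrite !prodw_cons prodw_nil mulg1 lconjM lconjK -/t IHa // lconjVgg.
by rewrite -{1}(lconjgg x) (can_eq (lconjK x)); case: (x == t).
Qed.

Lemma lconj_gen_mulgg u s : s \in S -> lconj u s * lconj u s = 1.
Proof. by move=> Ss; rewrite /lconj !mulgA mulgKV -(mulgA u) gen_mulgg // mulg1 mulgV. Qed.

(* If [t * w] were shorter than [w], prefixing a reduced word [b] for it with a palindrome for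
   [t] would give a word for [w]; so [t] would have odd parity in [b], and [ℓ w < size b]. *)
Lemma coxlen_lt_refl_mul a u s : Sword a -> s \in S -> size a = ℓ (prodw a) ->
  ~~ refl_parity a (lconj u s) -> ℓ (prodw a) < ℓ (lconj u s * prodw a).
Proof.
move=> Sa Ss size_a even_a; set t := lconj u s; set w := prodw a.
have [c Sc eq_c] := Sword_exists u.
have SP := all_palindrome Sc Ss; have tt1 : t * t = 1 by apply: lconj_gen_mulgg.
have prodP : prodw (palindrome c s) = t by rewrite prodw_palindrome // eq_c.
have [b [Sb eq_b size_b]] := reduced_word_exists (t * w).
have neq_len : ℓ (t * w) != ℓ w.
  apply/eqP=> eq_len; have := @odd_size_Sword (palindrome c s ++ a) b.
  rewrite !all_cat SP Sa Sb prodw_cat prodP eq_b => /(_ isT isT erefl).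
  rewrite size_cat size_palindrome addSn /= oddD odd_double size_a -/w size_b eq_len.
  by case: (odd _).
rewrite ltn_neqAle eq_sym neq_len leqNgt /=; apply/negP=> lt_len.
have := @refl_parity_prodw (palindrome c s ++ b) a.
rewrite !all_cat SP Sb Sa prodw_cat prodP eq_b mulgA tt1 mul1g => /(_ isT isT erefl t).
have oddP : refl_parity (palindrome c s) t by rewrite /t -eq_c refl_parity_palindrome.
rewrite refl_parity_cat (negbTE even_a) prodP oddP lconjVgg => /negbFE.
move/(coxlen_mul_refl_lt Sb).
by rewrite eq_b mulgA tt1 mul1g size_b ltnNge ltnW.
Qed.

Lemma coxlen_ascent_mul u z s : s \in S -> ℓ (u * z) = ℓ u + ℓ z ->
  ℓ u < ℓ (u * s) -> ℓ z < ℓ (s * z) -> ℓ (u * z) < ℓ (u * s * z).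
Proof.
move=> Ss len_uz asc_u asc_z.
have [a [Sa eq_a size_a]] := reduced_word_exists u.
have [b [Sb eq_b size_b]] := reduced_word_exists z.
have Sab : Sword (a ++ b) by rewrite all_cat Sa.
have -> : u * s * z = lconj u s * (u * z) by rewrite /lconj !mulgA mulgKV.
rewrite -eq_a -eq_b -prodw_cat; apply: coxlen_lt_refl_mul => //.
  by rewrite prodw_cat size_cat eq_a eq_b size_a size_b len_uz.
rewrite refl_parity_cat eq_a lconjK.
have no_refl c r : Sword c -> size c < ℓ (r * prodw c) -> ~~ refl_parity c r.
  by move=> Sc lt_c; apply/negP=> /(coxlen_mul_refl_lt Sc); rewrite ltnNge ltnW.
have even_a : ~~ refl_parity a (lconj u s).
  by apply: no_refl; rewrite // eq_a size_a /lconj mulgKV.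
have even_b : ~~ refl_parity b s by apply: no_refl; rewrite // eq_b size_b.
by rewrite (negbTE even_a) (negbTE even_b).
Qed.

Lemma longest_element_exists : exists w0, forall w, ℓ w <= ℓ w0.
Proof.
by have [w0 _ longest] := @arg_maxnP gT 1 predT ℓ isT; exists w0 => w; apply: longest.
Qed.

Section LongestElement.
Variable w0 : gT.
Hypothesis w0_longest : forall w, ℓ w <= ℓ w0.

Lemma coxlen_longest_split u : ℓ u + ℓ (u^-1 * w0) = ℓ w0.
Proof.
move: {2}(ℓ u) (erefl (ℓ u)) => n; elim: n u => [|n IHn] u len_u.
  by move/eqP: len_u; rewrite coxlen_eq0 => /eqP->; rewrite invg1 mul1g coxlen1.
have [s Ss desc_u] : exists2 s, s \in S & ℓ u = (ℓ (u * s)).+1.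
  by apply: right_descent_exists; rewrite -coxlen_eq0 len_u.
have len_us : ℓ (u * s) = n by move: desc_u; rewrite len_u => -[].
set z := (u * s)^-1 * w0; have split_us : ℓ (u * s) + ℓ z = ℓ w0 by apply: IHn.
have -> : u^-1 * w0 = s * z by rewrite /z invMg (gen_invg Ss) !mulgA gen_mulgg ?mul1g.
case: (coxlen_mulg_gen z Ss) => [|len_z]; last by rewrite len_u -split_us len_us len_z addnS.
move=> asc_z; exfalso.
have us_z : u * s * z = w0 by rewrite /z mulKVg.
have us_s : u * s * s = u by rewrite -mulgA gen_mulgg // mulg1.
have := @coxlen_ascent_mul (u * s) z s Ss.
rewrite us_z us_s split_us desc_u asc_z !ltnSn => /(_ erefl isT isT).
by rewrite ltnNge w0_longest.
Qed.

Lemma left_ascent_exists w : ℓ w < ℓ w0 -> exists2 s, s \in S & ℓ (s * w) = (ℓ w).+1.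
Proof.
move=> lt_w; have split_w := coxlen_longest_split w^-1.
rewrite invgK coxlenV in split_w.
have [t St desc_t] : exists2 t, t \in S & ℓ (w * w0) = (ℓ (t * (w * w0))).+1.
  apply: left_descent_exists; rewrite -coxlen_eq0; apply/eqP=> len0.
  by move: split_w lt_w; rewrite len0 addn0 => ->; rewrite ltnn.
exists t => //; have := coxlen_longest_split (w^-1 * t).
rewrite invMg invgK (gen_invg St) -mulgA -(coxlenV (w^-1 * t)) invMg invgK (gen_invg St).
by rewrite -split_w desc_t addnS -addSn => /addIn.
Qed.

Lemma coxlen_longest_descent u s : s \in S -> ℓ u = (ℓ (u * s)).+1 ->
  ℓ (s * (u^-1 * w0)) = (ℓ (u^-1 * w0)).+1.
Proof.
move=> Ss desc_u; have := coxlen_longest_split (u * s).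
rewrite invMg (gen_invg Ss) -mulgA -(coxlen_longest_split u) desc_u addSn -addnS.
by move/addnI.
Qed.

End LongestElement.

Lemma reduced_behead s a : s \in S -> Sword a ->
  ℓ (prodw (s :: a)) = size (s :: a) -> ℓ (prodw a) = size a.
Proof.
move=> Ss Sa; rewrite prodw_cons /= => len_sa.
apply/eqP; rewrite eqn_leq coxlen_le_size //=.
by have := coxlenM s (prodw a); rewrite len_sa coxlen_gen // add1n.
Qed.

Section Building.
Variables (Ch : Type) (delta : Ch -> Ch -> gT).
Hypothesis bldg : is_building S delta.
Local Notation δ := delta.

Lemma WD1 c e : δ c e = 1 <-> c = e.
Proof. by case: bldg. Qed.

Lemma deltaxx c : δ c c = 1.
Proof. exact/WD1. Qed.

Lemma WD2 c e c' s : s \in S -> δ c' c = s ->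
  (δ c' e = s * δ c e \/ δ c' e = δ c e) /\
  (ℓ (s * δ c e) = (ℓ (δ c e)).+1 -> δ c' e = s * δ c e).
Proof. by case: bldg => _ _ _ WD2 _; apply: WD2. Qed.

Lemma WD3 c e s : s \in S -> exists c', δ c' c = s /\ δ c' e = s * δ c e.
Proof. by case: bldg => _ _ _ _ WD3; apply: WD3. Qed.

Lemma delta_gen_sym c c' s : s \in S -> δ c' c = s -> δ c c' = s.
Proof.
move=> Ss adj; case: (WD2 c' Ss adj) => -[] + _; rewrite deltaxx.
  by move=> eq_s; rewrite -[δ c c'](mulKg s) -eq_s mulg1 (gen_invg Ss).
by move/esym/WD1=> eq_cc'; move: (gen_neq1 Ss); rewrite -adj eq_cc' deltaxx eqxx.
Qed.

Lemma panel_delta y x x' s : s \in S -> δ y x = s -> δ y x' = s -> x <> x' ->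
  δ x x' = s.
Proof.
move=> Ss yx yx' neq_xx'; case: (WD2 x' Ss (delta_gen_sym Ss yx)) => -[+|->//] _.
by rewrite yx' gen_mulgg // => /WD1.
Qed.

(* The projection of [e] onto the s-panel of [y] is unique when it is not [y] itself. *)
Lemma panel_proj_uniq y x x' e s : s \in S -> δ y x = s -> δ y x' = s ->
  δ x e = s * δ y e -> δ x' e = s * δ y e -> ℓ (s * δ y e) < ℓ (δ y e) -> x = x'.
Proof.
move=> Ss yx yx' xe x'e lt_len; apply: NNPP => neq_xx'.
have asc : ℓ (s * δ x' e) = (ℓ (δ x' e)).+1.
  rewrite x'e mulgA gen_mulgg // mul1g.
  case: (coxlen_mulg_gen (δ y e) Ss) => // eq_len.
  by move: lt_len; rewrite eq_len ltnNge leqnSn.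
have := (WD2 e Ss (panel_delta Ss yx yx' neq_xx')).2 asc.
rewrite xe x'e mulgA gen_mulgg // mul1g -{2}[δ y e]mul1g => /mulIg s1.
by move: (gen_neq1 Ss); rewrite s1 eqxx.
Qed.

Inductive gallery : Ch -> seq gT -> Ch -> Prop :=
| gallery_nil c : gallery c [::] c
| gallery_cons c c1 s a e : δ c c1 = s -> gallery c1 a e -> gallery c (s :: a) e.

Lemma gallery_rcons c a e e' s : gallery c a e -> δ e e' = s -> gallery c (rcons a s) e'.
Proof.
elim=> {c a e} [c|c c1 t a e cc1 _ IH] ee'; first exact: gallery_cons ee' (gallery_nil e').
exact: gallery_cons cc1 (IH ee').
Qed.

Lemma gallery_rev c a e : gallery c a e -> Sword a -> gallery e (rev a) c.
Proof.
elim=> {c a e} [c|c c1 s a e cc1 _ IH] /=; first by constructor.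
by case/andP=> Ss Sa; rewrite rev_cons; apply: gallery_rcons (IH Sa) (delta_gen_sym Ss cc1).
Qed.

Lemma gallery_delta c a e : gallery c a e -> Sword a -> ℓ (prodw a) = size a ->
  δ c e = prodw a.
Proof.
elim=> {c a e} [c|c c1 s a e cc1 _ IH] /=; first by rewrite deltaxx prodw_nil.
case/andP=> Ss Sa red_sa; have red_a := reduced_behead Ss Sa red_sa.
rewrite prodw_cons -IH //; apply: (WD2 e Ss cc1).2.
by rewrite IH // -prodw_cons red_sa red_a.
Qed.

Lemma reduced_gallery_exists c e :
  exists a, [/\ gallery c a e, Sword a, prodw a = δ c e & size a = ℓ (δ c e)].
Proof.
move: {2}(ℓ (δ c e)) (erefl (ℓ (δ c e))) => n; elim: n c => [|n IHn] c len_ce.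
  move/eqP: len_ce; rewrite coxlen_eq0 => /eqP/WD1 <-.
  by exists [::]; rewrite deltaxx prodw_nil coxlen1; split=> //; constructor.
have [s Ss desc] : exists2 s, s \in S & ℓ (δ c e) = (ℓ (s * δ c e)).+1.
  by apply: left_descent_exists; rewrite -coxlen_eq0 len_ce.
have [c' [c'c c'e]] := WD3 c e Ss.
have len_c'e : ℓ (δ c' e) = n by rewrite c'e; move: desc; rewrite len_ce => -[].
have [a [gal_a Sa prod_a size_a]] := IHn c' len_c'e.
exists (s :: a); split=> /=; first exact: gallery_cons (delta_gen_sym Ss c'c) gal_a.
- by rewrite Ss.
- by rewrite prodw_cons prod_a c'e mulgA gen_mulgg // mul1g.
by rewrite size_a c'e desc.
Qed.

Lemma deltaV c e : δ e c = (δ c e)^-1.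
Proof.
have [a [gal_a Sa <- size_a]] := reduced_gallery_exists c e.
rewrite -prodw_rev // (gallery_delta (gallery_rev gal_a Sa)) ?all_rev //.
by rewrite prodw_rev // coxlenV size_rev size_a.
Qed.

Lemma gallery_walk a y e : Sword a ->
  exists x, gallery y a x /\ δ x e = (prodw a)^-1 * δ y e.
Proof.
elim: a y => [|s a IHa] y /=.
  by exists y; rewrite prodw_nil invg1 mul1g; split=> //; constructor.
case/andP=> Ss Sa; have [y1 [y1y y1e]] := WD3 y e Ss; have [x [gal_x xe]] := IHa y1 Sa.
exists x; split; first exact: gallery_cons (delta_gen_sym Ss y1y) gal_x.
by rewrite xe y1e prodw_cons invMg (gen_invg Ss) !mulgA.
Qed.

Lemma delta_surj c w : exists e, δ c e = w.
Proof.
have [a [Sa <- size_a]] := reduced_word_exists w.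
have [e [gal_e _]] := gallery_walk c c Sa.
by exists e; rewrite (gallery_delta gal_e Sa) ?size_a.
Qed.

Lemma panel_closer_uniq e e' b s y : s \in S -> δ e' e = s -> δ b e = s ->
  ℓ (δ e' y) < ℓ (δ e y) -> ℓ (δ b y) < ℓ (δ e y) -> e' = b.
Proof.
move=> Ss e'e be lt_e' lt_b.
have closer z : δ z e = s -> ℓ (δ z y) < ℓ (δ e y) -> δ z y = s * δ e y.
  by move=> ze; case: (WD2 y Ss ze) => -[//|->]; rewrite ltnn.
have e'y := closer _ e'e lt_e'; have b_y := closer _ be lt_b.
apply: (panel_proj_uniq Ss (delta_gen_sym Ss e'e) (delta_gen_sym Ss be) e'y b_y).
by rewrite -e'y.
Qed.

Definition avoids (B : seq Ch) (x : Ch) : Prop :=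
  forall i, i < size B -> nth x B i <> x.

(* By [panel_closer_uniq], excluding one chamber of the panel per target [y i] suffices. *)
Lemma panel_avoid_closer (I : eqType) (y : I -> Ch) e s (r : seq I) : s \in S ->
  exists B, forall e', δ e' e = s -> avoids B e' ->
    {in r, forall i, ℓ (δ e (y i)) <= ℓ (δ e' (y i))}.
Proof.
move=> Ss; elim: r => [|i r [B farB]]; first by exists [::].
case: (classic (exists b, δ b e = s /\ ℓ (δ b (y i)) < ℓ (δ e (y i)))).
  case=> b [be lt_b]; exists (b :: B) => e' e'e avoid_e' j.
  case/predU1P=> [->|jr]; last by apply: farB => // k /(avoid_e' k.+1).
  rewrite leqNgt; apply/negP=> lt_e'.
  exact: (avoid_e' 0%N isT (esym (panel_closer_uniq Ss e'e be lt_e' lt_b))).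
move=> no_closer; exists B => e' e'e avoid_e' j.
case/predU1P=> [->|]; last exact: farB.
by rewrite leqNgt; apply/negP=> lt_e'; apply: no_closer; exists e'.
Qed.

Section Apartment.
Variables (w0 : gT) (c0 d0 : Ch).
Hypothesis w0_longest : forall w, ℓ w <= ℓ w0.
Hypothesis c0d0 : δ c0 d0 = w0.

Definition apt_point (u : gT) (x : Ch) : Prop := δ c0 x = u /\ δ x d0 = u^-1 * w0.

Lemma apt_point_exists u : exists x, apt_point u x.
Proof.
have [a [Sa prod_a size_a]] := reduced_word_exists u.
have [x [gal_x xd0]] := gallery_walk c0 d0 Sa.
by exists x; split; rewrite ?(gallery_delta gal_x Sa) ?xd0 prod_a ?size_a ?c0d0.
Qed.

Lemma apt_point_descent u x s : apt_point u x -> s \in S -> ℓ u = (ℓ (u * s)).+1 ->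
  exists x1, apt_point (u * s) x1 /\ δ x1 x = s.
Proof.
move=> [c0x xd0] Ss desc_u; have [x1 [x1x x1c0]] := WD3 x c0 Ss.
exists x1; split=> //; split; first by rewrite deltaV x1c0 deltaV c0x invMg invgK (gen_invg Ss).
have asc : ℓ (s * δ x d0) = (ℓ (δ x d0)).+1 by rewrite xd0 coxlen_longest_descent.
by rewrite ((WD2 d0 Ss x1x).2 asc) xd0 invMg (gen_invg Ss) mulgA.
Qed.

Lemma apt_point_uniq u x x' : apt_point u x -> apt_point u x' -> x = x'.
Proof.
move: {2}(ℓ u) (erefl (ℓ u)) => n; elim: n u x x' => [|n IHn] u x x' len_u ux ux'.
  move/eqP: len_u; rewrite coxlen_eq0 => /eqP u1.
  by move: ux.1 ux'.1; rewrite u1 => /WD1<- /WD1<-.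
have [s Ss desc_u] : exists2 s, s \in S & ℓ u = (ℓ (u * s)).+1.
  by apply: right_descent_exists; rewrite -coxlen_eq0 len_u.
have [x1 [usx1 x1x]] := apt_point_descent ux Ss desc_u.
have [x1' [usx1' x1'x']] := apt_point_descent ux' Ss desc_u.
have len_us : ℓ (u * s) = n by move: desc_u; rewrite len_u => -[].
move: x1'x'; rewrite -(IHn _ _ _ len_us usx1 usx1') => x1x'.
have x1d0 : δ x1 d0 = s * (u^-1 * w0) by rewrite usx1.2 invMg (gen_invg Ss) mulgA.
have xd0 : δ x d0 = s * δ x1 d0 by rewrite x1d0 mulgA gen_mulgg // mul1g ux.2.
have x'd0 : δ x' d0 = s * δ x1 d0 by rewrite x1d0 mulgA gen_mulgg // mul1g ux'.2.
apply: (panel_proj_uniq Ss x1x x1x' xd0 x'd0).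
by rewrite -xd0 ux.2 x1d0 coxlen_longest_descent.
Qed.

Definition apt (u : gT) : Ch :=
  proj1_sig (constructive_indefinite_description _ (apt_point_exists u)).

Lemma aptP u : apt_point u (apt u).
Proof. exact: proj2_sig (constructive_indefinite_description _ (apt_point_exists u)). Qed.

Lemma apt_gen u s : s \in S -> δ (apt u) (apt (u * s)) = s.
Proof.
move=> Ss; case: (coxlen_mulgr_gen u Ss) => [asc_u|desc_u].
  have desc_us : ℓ (u * s) = (ℓ (u * s * s)).+1 by rewrite -mulgA gen_mulgg // mulg1.
  have [x1 [usx1 x1x]] := apt_point_descent (aptP (u * s)) Ss desc_us.
  by rewrite -mulgA gen_mulgg // mulg1 in usx1; rewrite (apt_point_uniq (aptP u) usx1).
have [x1 [usx1 x1x]] := apt_point_descent (aptP u) Ss desc_u.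
by rewrite (apt_point_uniq (aptP (u * s)) usx1); apply: delta_gen_sym.
Qed.

Lemma apt_isometry u v : δ (apt u) (apt v) = u^-1 * v.
Proof.
move: {2}(ℓ (u^-1 * v)) (erefl (ℓ (u^-1 * v))) => n.
elim: n u => [|n IHn] u len_uv.
  move/eqP: len_uv; rewrite coxlen_eq0 => /eqP/(canRL (mulKVg u)); rewrite mulg1 => ->.
  by rewrite deltaxx mulVg.
have [s Ss desc] : exists2 s, s \in S & ℓ (u^-1 * v) = (ℓ (s * (u^-1 * v))).+1.
  by apply: left_descent_exists; rewrite -coxlen_eq0 len_uv.
have us_v : (u * s)^-1 * v = s * (u^-1 * v) by rewrite invMg (gen_invg Ss) mulgA.
have len_us : ℓ ((u * s)^-1 * v) = n by rewrite us_v; move: desc; rewrite len_uv => -[].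
have := IHn _ len_us; rewrite us_v => IHus.
have asc : ℓ (s * δ (apt (u * s)) (apt v)) = (ℓ (δ (apt (u * s)) (apt v))).+1.
  by rewrite IHus mulgA gen_mulgg // mul1g.
by rewrite ((WD2 _ Ss (apt_gen u Ss)).2 asc) IHus mulgA gen_mulgg // mul1g.
Qed.

End Apartment.

Section CommonOpposite.
Variables (w0 : gT) (I : finType) (y : I -> Ch).
Hypothesis w0_longest : forall w, ℓ w <= ℓ w0.
Hypothesis thick : infinitely_thick S δ.

Definition dist_sum (e : Ch) : nat := \sum_(i : I) ℓ (δ e (y i)).

Lemma dist_sum_bound e : dist_sum e <= #|I| * ℓ w0.
Proof. by rewrite -sum_nat_const; apply: leq_sum => i _; apply: w0_longest. Qed.

Lemma dist_sum_increase e i : ℓ (δ e (y i)) < ℓ w0 -> exists e', dist_sum e < dist_sum e'.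
Proof.
move=> lt_i; have [s Ss asc] := left_ascent_exists w0_longest lt_i.
have [B farB] := panel_avoid_closer y e (enum I) Ss.
have [x [ex avoid_x]] := thick e Ss (e :: B).
have {}ex : δ e x = s by case: ex => // /WD1 eq_ex; case: (avoid_x 0%N isT eq_ex).
have xe := delta_gen_sym Ss ex.
have far j : ℓ (δ e (y j)) <= ℓ (δ x (y j)).
  by apply: (farB x xe (fun k => avoid_x k.+1)); rewrite mem_enum.
have farther : ℓ (δ e (y i)) < ℓ (δ x (y i)) by rewrite ((WD2 (y i) Ss xe).2 asc) asc.
exists x; rewrite /dist_sum (bigD1 i) //= [X in _ < X](bigD1 i) //= -addSn.
by apply: leq_add farther _; apply: leq_sum => j _.
Qed.

Lemma common_opposite_exists : exists e, forall i, ℓ (δ e (y i)) = ℓ w0.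
Proof.
have [c] : inhabited Ch by case: bldg.
have [e e_max] := bounded_nat_fun_max c dist_sum_bound.
exists e => i; apply/eqP; rewrite eqn_leq w0_longest leqNgt; apply/negP=> lt_i.
by have [e' ] := dist_sum_increase lt_i; rewrite ltnNge e_max.
Qed.

End CommonOpposite.

End Building.

End CoxeterGroup.

Theorem lemma4p13 (gT : finGroupType) (S : {set gT}) (Ch : Type)
    (delta : Ch -> Ch -> gT) :
  is_building S delta -> infinitely_thick S delta ->
  exists c : Ch, exists A : Ch -> Prop,
    apartment delta A /\ (forall d, A d -> opposite S delta c d).
Proof.
move=> bldg thick; have coxS : coxeter_system S by case: bldg.
have [c0] : inhabited Ch by case: bldg.
have [w0 w0_longest] := longest_element_exists S.
have [d0 c0d0] := delta_surj coxS bldg c0 w0.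
pose f := apt coxS bldg c0d0.
have [e e_opp] := common_opposite_exists coxS bldg f w0_longest thick.
exists e, (fun x => exists u, x = f u); split.
  by exists f; split=> // u v; apply: apt_isometry.
by move=> _ [u ->] w; rewrite e_opp w0_longest.
Qed.
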